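(* Let $n\ge1$ and $1\le k\le n$. The reverse-admissible $k\times k$ minors $(I_2,I_1)$ are in a weight preserving bijection with the single column symplectic PBW tableaux of length $k$.
   Context: Let $\bar i:=2n+1-i$ and $\mathcal N=\{1<\dots<n<\bar n<\dots<\bar1\}$; $\varepsilon_1,\dots,\varepsilon_n$ is the standard basis of the dual Cartan of $\mathfrak{sp}_{2n}$. A $k\times k$ minor is a pair $(I_2,I_1)$ of subsets of $\{1,\dots,n\}$ with $|I_1|+|I_2|=k$; its entries are the elements $i\in I_1$ and $\bar i$ for $i\in I_2$, and its weight is $\sum_{i\in I_1}\varepsilon_i-\sum_{i\in I_2}\varepsilon_i$. With $\Gamma=I_1\cap I_2=\{\gamma_1<\dots<\gamma_\lambda\}$, the minor is reverse-admissible if there is $T=\{\tau_1<\dots<\tau_\lambda\}\subset\{1,\dots,n\}\setminus(I_1\cup I_2)$ with $|T|=|\Gamma|$ and $\tau_i\le\gamma_i$ for all $i$. A single column symplectic PBW tableau of length $k$ is a column of $k$ boxes with entries $T_1,\dots,T_k\in\mathcal N$ (top to bottom) such that: (i) if $T_i\le k$ then $T_i=i$; (ii) if $i_1<i_2$ and $T_{i_1}\ne i_1$ then $T_{i_1}>T_{i_2}$; (iii) if $T_i=i$ and $T_{i'}=\bar i$ for some $i'$, then $i'<i$, whenever $i<k$. Its weight is $\sum_{i\le n\text{ appearing}}\varepsilon_i-\sum_{j\le n:\ \bar j\text{ appearing}}\varepsilon_j$. *)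

From mathcomp Require Import all_boot all_algebra.
Set Implicit Arguments. Unset Strict Implicit. Unset Printing Implicit Defensive.
Import GRing.Theory.

(* Conventions:
   - An element j : 'I_n of a subset of {1..n} represents the integer j+1.
   - The alphabet N = {1<...<n<nbar<...<1bar} is encoded by integers 1..2n
     with ibar = 2n+1-i (as in the paper); an entry is e : 'I_(2n).+1 with
     the side condition 1 <= e.
   - A position p : 'I_k in a column represents the row p+1 (top = 1).
   - A weight sum_i a_i eps_i is the function i |-> a_i, i.e. 'I_n -> int
     (j : 'I_n standing for eps_(j+1)). *)

(* A minor (I_2, I_1): first component I_2, second I_1. *)
Definition minor (n : nat) : Type := ({set 'I_n} * {set 'I_n})%type.

Definition is_kminor (n k : nat) (m : minor n) : bool :=
  #|m.2| + #|m.1| == k.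

Definition sorted_elems (n : nat) (A : {set 'I_n}) : seq nat :=
  sort leq [seq (val x).+1 | x <- enum A].

Definition reverse_admissible (n : nat) (m : minor n) : bool :=
  let I2 := m.1 in let I1 := m.2 in
  let G := I1 :&: I2 in
  [exists T : {set 'I_n},
     [&& T \subset ~: (I1 :|: I2), #|T| == #|G| &
         [forall j : 'I_n, (j < #|G|)%N ==>
            (nth 0 (sorted_elems T) j <= nth 0 (sorted_elems G) j)%N]]].

Definition minor_weight (n : nat) (m : minor n) : {ffun 'I_n -> int} :=
  [ffun j => ((j \in m.2 : nat)%:Z - (j \in m.1 : nat)%:Z)%R].

Definition column (n k : nat) : Type := {ffun 'I_k -> 'I_(2 * n).+1}.

Definition is_spPBW (n k : nat) (T : column n k) : bool :=
  let e := fun p : 'I_k => val (T p) in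
  [&& [forall p : 'I_k, 1 <= e p]%N,
      (* (i) *)
      [forall p : 'I_k, (e p <= k)%N ==> (e p == p.+1)],
      (* (ii) *)
      [forall p1 : 'I_k, forall p2 : 'I_k,
          ((p1 < p2)%N && (e p1 != p1.+1)) ==> (e p2 < e p1)%N] &
      (* (iii): for rows i = p+1 < k *)
      [forall p : 'I_k, forall p' : 'I_k,
          [&& (p.+1 < k)%N, e p == p.+1 & e p' == (2 * n).+1 - p.+1]
            ==> (p' < p)%N]].

Definition column_weight (n k : nat) (T : column n k) : {ffun 'I_n -> int} :=
  [ffun j : 'I_n =>
     (([exists p : 'I_k, val (T p) == (val j).+1] : nat)%:Z
      - ([exists p : 'I_k, val (T p) == ((2 * n).+1 - (val j).+1)%N] : nat)%:Z)%R].

From mathcomp Require Import all_boot all_algebra.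
From mathcomp Require Import zify.
Set Implicit Arguments. Unset Strict Implicit. Unset Printing Implicit Defensive.

(* A minor (I2, I1) is determined by its set of entries E = I1 U {ibar | i in I2},
   a k-subset of {1, ..., 2n}, and both weights only depend on the set of entries.
   Rules (i) and (ii) force the column with entries E: each entry i <= k of E
   stands in row i, and the other entries fill the remaining (free) rows in
   decreasing order; this column always satisfies (i) and (ii).  Since barred
   entries exceed unbarred ones, rule (iii) at g in Gamma says that the barred
   entries xbar >= gbar fit into the free rows above row g:
       #{x in I2 | x <= g} <= #{j < g | j notin I1}.
   Removing #{j in I2 \ I1 | j < g} from both sides turns this into the Hall
   condition #{x in Gamma | x <= g} <= #{c notin I1 U I2 | c <= g}, which is
   equivalent to reverse admissibility (take for T the |Gamma| smallest elements
   outside I1 U I2).  For g >= k the inequality holds by counting alone. *)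

Lemma count_iota_card m (P : pred nat) : count P (iota 0 m) = #|[set i : 'I_m | P i]|.
Proof.
rewrite -sum1_count (_ : iota 0 m = index_iota 0 m) ?big_mkord ?sum1dep_card //.
by rewrite /index_iota subn0.
Qed.

Lemma count_iota_ltn m p (P : pred nat) : p <= m ->
  count (fun i => (i < p) && P i) (iota 0 m) = count P (iota 0 p).
Proof.
move=> pm; rewrite -(subnKC pm) iotaD count_cat add0n.
rewrite (eq_in_count (a2 := P)); last by move=> i; rewrite mem_iota => /andP[_ ->].
rewrite -[RHS]addn0; congr (_ + _); apply/eqP; rewrite eqn0Ngt -has_count.
by apply/hasPn => i; rewrite mem_iota => /andP[pi _]; rewrite ltnNge pi.
Qed.

Lemma card_ord_ltn n (g : nat) : g <= n -> #|[set j : 'I_n | j < g]| = g.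
Proof.
move=> gn; rewrite -[RHS](size_iota 0) -count_predT -(count_iota_ltn _ gn).
by rewrite count_iota_card; apply: eq_card => j; rewrite !inE andbT.
Qed.

Lemma ltn_sorted_leq_nth s i j : sorted ltn s -> i <= j -> j < size s ->
  nth 0 s i <= nth 0 s j.
Proof.
rewrite ltn_sorted_uniq_leq => /andP[_ ss] ij js.
by apply: (sorted_leq_nth leq_trans leqnn 0 ss); rewrite // inE (leq_ltn_trans ij).
Qed.

Lemma ltn_sorted_ltn_nth s i j : sorted ltn s -> i < j -> j < size s ->
  nth 0 s i < nth 0 s j.
Proof.
by move=> ss ij js; apply: (sorted_ltn_nth ltn_trans 0 ss); rewrite // inE (ltn_trans ij).
Qed.

Lemma ltn_sorted_nth_leqE s j x : sorted ltn s -> j < size s ->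
  (nth 0 s j <= x) = (j < count (leq^~ x) s).
Proof.
move=> ss js; apply/idP/idP => [le_jx | lt_j].
  have: all (leq^~ x) (take j.+1 s).
    apply/(all_nthP 0) => i; rewrite size_takel // => ij.
    by rewrite nth_take //; apply: leq_trans le_jx; apply: ltn_sorted_leq_nth.
  rewrite all_count size_takel // => /eqP take_le.
  by rewrite -(cat_take_drop j.+1 s) count_cat take_le leq_addr.
rewrite leqNgt; apply/negP => lt_xj; move: lt_j.
have drop_le: count (leq^~ x) (drop j s) = 0.
  apply/eqP; rewrite eqn0Ngt -has_count; apply/hasPn => y /(nthP 0)[t].
  rewrite size_drop nth_drop -ltnNge => tj <-; apply: leq_trans lt_xj _.
  by apply: ltn_sorted_leq_nth; rewrite ?leq_addr // -ltn_subRL.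
rewrite -(cat_take_drop j s) count_cat drop_le addn0 ltnNge.
by rewrite (leq_trans (count_size _ _)) // size_take_min geq_minl.
Qed.

Lemma count_leq_nth s j : sorted ltn s -> j < size s ->
  count (leq^~ (nth 0 s j)) s = j.+1.
Proof.
move=> ss js; apply/eqP; rewrite eqn_leq -(ltn_sorted_nth_leqE _ ss js) leqnn andbT.
case: (ltnP j.+1 (size s)) => [js' | sj]; last exact: leq_trans (count_size _ _) sj.
by rewrite leqNgt -(ltn_sorted_nth_leqE _ ss js') -ltnNge ltn_sorted_ltn_nth.
Qed.

Section SortedElems.
Variable n : nat.
Implicit Types A : {set 'I_n}.

Lemma sorted_elems_ltn A : sorted ltn (sorted_elems A).
Proof.
rewrite ltn_sorted_uniq_leq sort_uniq sort_sorted ?andbT; last exact: leq_total.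
by rewrite map_inj_uniq ?enum_uniq // => a b /succn_inj /val_inj.
Qed.

Lemma size_sorted_elems A : size (sorted_elems A) = #|A|.
Proof. by rewrite size_sort size_map cardE. Qed.

Lemma mem_sorted_elemsP A x :
  reflect (exists2 a, a \in A & x = a.+1) (x \in sorted_elems A).
Proof.
rewrite mem_sort; apply: (iffP mapP) => -[a aA ->]; exists a => //.
  by rewrite -mem_enum.
by rewrite mem_enum.
Qed.

Lemma count_sorted_elems_leq A (g : nat) :
  count (leq^~ g.+1) (sorted_elems A) = #|[set a in A | a <= g]|.
Proof. by rewrite count_sort count_map -sum1_count big_enum_cond sum1dep_card. Qed.

End SortedElems.

Definition fit_condition n (I1 I2 : {set 'I_n}) : Prop :=
  forall g, g \in I1 :&: I2 ->
  #|[set x in I2 | x <= g]| <= #|[set j : 'I_n | (j < g) && (j \notin I1)]|.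

Section FitCondition.
Variables (n : nat) (I1 I2 : {set 'I_n}) (g : 'I_n).

Lemma leq_ord_notin (A : {set 'I_n}) (x : 'I_n) : g \in A -> x \notin A ->
  (x <= g) = (x < g).
Proof.
by move=> gA xA; rewrite leq_eqVlt; case: eqP => [/val_inj xg|//]; rewrite xg gA in xA.
Qed.

Lemma fit_inequalityE : g \in I1 -> g \in I2 ->
  (#|[set x in I1 :&: I2 | x <= g]| <= #|[set c in ~: (I1 :|: I2) | c <= g]|) =
  (#|[set x in I2 | x <= g]| <= #|[set j : 'I_n | (j < g) && (j \notin I1)]|).
Proof.
move=> g1 g2; set D := [set j in I2 :\: I1 | j < g].
have <- : #|D| + #|[set x in I1 :&: I2 | x <= g]| = #|[set x in I2 | x <= g]|.
  rewrite -[RHS](cardsID I1) addnC; congr (_ + _); apply: eq_card => x; rewrite !inE;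
    case: (boolP (x \in I1)) => xI1; last rewrite (leq_ord_notin g1 xI1);
    by case: (x <= g); case: (x < g); case: (x \in I2).
have <- : #|D| + #|[set c in ~: (I1 :|: I2) | c <= g]| =
          #|[set j : 'I_n | (j < g) && (j \notin I1)]|.
  rewrite -[RHS](cardsID I2); congr (_ + _); apply: eq_card => x; rewrite !inE;
    case: (boolP (x \in I1)) => xI1; last rewrite (leq_ord_notin g1 xI1);
    by case: (x <= g); case: (x < g); case: (x \in I2).
by rewrite leq_add2l.
Qed.

Lemma fit_inequality_large : g \in I1 -> #|I1| + #|I2| <= g.+1 ->
  #|[set x in I2 | x <= g]| <= #|[set j : 'I_n | (j < g) && (j \notin I1)]|.
Proof.
move=> g1 large; set B := [set j : 'I_n | j < g].
have cardB : #|B| = g := card_ord_ltn (ltnW (ltn_ord g)).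
have splitB : #|B :&: I1| + #|[set j : 'I_n | (j < g) && (j \notin I1)]| = #|B|.
  by rewrite -(cardsID I1 B); congr (_ + _); apply: eq_card => j; rewrite !inE andbC.
have : #|B :&: I1| < #|I1|.
  rewrite (cardsD1 g I1) g1 ltnS; apply: subset_leq_card; apply/subsetP => j.
  by rewrite !inE => /andP[jg ->]; rewrite andbT neq_ltn jg.
have : #|[set x in I2 | x <= g]| <= #|I2|.
  by apply: subset_leq_card; apply/subsetP => x; rewrite inE => /andP[].
lia.
Qed.

End FitCondition.

Lemma reverse_admissible_fit n (m : minor n) :
  reverse_admissible m -> fit_condition m.2 m.1.
Proof.
case: m => I2 I1; rewrite /reverse_admissible /=.
set G := I1 :&: I2; set C := ~: (I1 :|: I2).
case/existsP=> T /and3P[/subsetP sTC /eqP cardT /forallP leTG] g gG.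
have /setIP[g1 g2] := gG; rewrite -fit_inequalityE //.
have /(nthP 0)[j jG jg] : g.+1 \in sorted_elems G by apply/mem_sorted_elemsP; exists g.
rewrite size_sorted_elems in jG.
have jn : j < n by rewrite (leq_trans jG) // (leq_trans (max_card G)) ?card_ord.
have := count_leq_nth (sorted_elems_ltn G); rewrite size_sorted_elems => /(_ _ jG).
rewrite jg count_sorted_elems_leq => ->.
have := leTG (Ordinal jn); rewrite /= jG jg /=.
rewrite ltn_sorted_nth_leqE ?sorted_elems_ltn ?size_sorted_elems ?cardT //.
rewrite count_sorted_elems_leq => /leq_trans; apply; apply: subset_leq_card.
by apply/subsetP => x; rewrite !inE => /andP[/sTC]; rewrite !inE => -> ->.
Qed.

Lemma fit_reverse_admissible n (m : minor n) :
  fit_condition m.2 m.1 -> reverse_admissible m.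
Proof.
case: m => I2 I1 /= fit; rewrite /reverse_admissible /=.
set G := I1 :&: I2; set C := ~: (I1 :|: I2).
set sG := sorted_elems G; set sC := sorted_elems C.
have free_below j : j < #|G| -> j < count (leq^~ (nth 0 sG j)) sC.
  move=> jG; rewrite -size_sorted_elems -/sG in jG.
  have /mem_sorted_elemsP[g gG gj] := mem_nth 0 jG.
  have := count_leq_nth (sorted_elems_ltn G) jG.
  rewrite -/sG gj !count_sorted_elems_leq => <-.
  by have /setIP[g1 g2] := gG; rewrite fit_inequalityE //; apply: fit.
have GC : #|G| <= #|C|.
  case eG: #|G| => [//|l]; have := free_below l; rewrite eG ltnSn => /(_ isT).
  by rewrite -(size_sorted_elems C) => /leq_trans; apply; apply: count_size.
pose T := [set c : 'I_n | c.+1 \in take #|G| sC].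
have sT : sorted_elems T = take #|G| sC.
  apply: (irr_sorted_eq ltn_trans ltnn); first exact: sorted_elems_ltn.
    exact/take_sorted/sorted_elems_ltn.
  move=> x; apply/mem_sorted_elemsP/idP => [[c] | /[dup] /mem_take].
    by rewrite inE => cT ->.
  by case/mem_sorted_elemsP=> c _ -> cT; exists c; rewrite ?inE.
apply/existsP; exists T; apply/and3P; split.
- apply/subsetP => c; rewrite inE => /mem_take /mem_sorted_elemsP[c' c'C].
  by move/succn_inj/val_inj->.
- by rewrite -size_sorted_elems sT size_takel // size_sorted_elems.
apply/forallP => j; apply/implyP => jG.
rewrite sT nth_take // ltn_sorted_nth_leqE ?sorted_elems_ltn ?free_below //.
by rewrite size_sorted_elems (leq_trans jG).
Qed.

Section Entries.
Variable n : nat.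
Local Notation entry := 'I_(2 * n).+1.

Definition unbarred (j : 'I_n) : entry := inord j.+1.
Definition barred (j : 'I_n) : entry := inord ((2 * n).+1 - j.+1).

Lemma val_unbarred j : unbarred j = j.+1 :> nat.
Proof. by rewrite /unbarred inordK //; have := ltn_ord j; lia. Qed.

Lemma val_barred j : barred j = (2 * n).+1 - j.+1 :> nat.
Proof. by rewrite /barred inordK //; have := ltn_ord j; lia. Qed.

Lemma unbarred_inj : injective unbarred.
Proof. by move=> i j /(congr1 (@nat_of_ord _)); rewrite !val_unbarred => -[/val_inj]. Qed.

Lemma barred_inj : injective barred.
Proof.
move=> i j /(congr1 (@nat_of_ord _)); rewrite !val_barred => e; apply/val_inj => /=.
by have := ltn_ord i; have := ltn_ord j; lia.
Qed.

Lemma unbarred_neq_barred i j : unbarred i != barred j.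
Proof.
by rewrite -val_eqE /= val_unbarred val_barred; have := ltn_ord i; have := ltn_ord j; lia.
Qed.

Variant entry_spec (e : entry) : Type :=
  | EntryUnbarred j of e = unbarred j
  | EntryBarred j of e = barred j.

Lemma entryP (e : entry) : 0 < e -> entry_spec e.
Proof.
move=> e_gt0; have := ltn_ord e; case: (leqP e n) => en e2n.
  have lt : e.-1 < n by lia.
  apply: (EntryUnbarred (j := Ordinal lt)); apply/val_inj => /=.
  by rewrite val_unbarred /=; lia.
have lt : 2 * n - e < n by lia.
apply: (EntryBarred (j := Ordinal lt)); apply/val_inj => /=.
by rewrite val_barred /=; lia.
Qed.

Definition minor_entries (m : minor n) : {set entry} :=
  unbarred @: m.2 :|: barred @: m.1.

Definition entries_minor (S : {set entry}) : minor n :=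
  (barred @^-1: S, unbarred @^-1: S).

Lemma ord0_notin_minor_entries m : ord0 \notin minor_entries m.
Proof.
apply/negP; rewrite inE => /orP[] /imsetP[j _] /(congr1 (@nat_of_ord _)) /=.
  by rewrite val_unbarred.
by rewrite val_barred; have := ltn_ord j; lia.
Qed.

Lemma barred_notin_unbarred (A : {set 'I_n}) j : barred j \notin unbarred @: A.
Proof.
by apply/imsetP => -[i _ /eqP]; rewrite eq_sym (negbTE (unbarred_neq_barred i j)).
Qed.

Lemma unbarred_notin_barred (A : {set 'I_n}) j : unbarred j \notin barred @: A.
Proof. by apply/imsetP => -[i _ /eqP]; rewrite (negbTE (unbarred_neq_barred j i)). Qed.

Lemma minor_entriesK : cancel minor_entries entries_minor.
Proof.
case=> I2 I1; rewrite /entries_minor /minor_entries /=; congr pair; apply/setP => j.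
  by rewrite !inE (negbTE (barred_notin_unbarred _ _)) (mem_imset _ _ barred_inj).
by rewrite !inE (negbTE (unbarred_notin_barred _ _)) (mem_imset _ _ unbarred_inj) orbF.
Qed.

Lemma entries_minorK (S : {set entry}) :
  ord0 \notin S -> minor_entries (entries_minor S) = S.
Proof.
move=> S0; apply/setP => e; rewrite inE; apply/orP/idP.
  by case=> /imsetP[j]; rewrite inE => jS ->.
move=> eS; have: 0 < e.
  by rewrite lt0n; apply: contraNneq S0 => e0; rewrite (_ : ord0 = e) //; apply/val_inj.
by case/entryP=> j ej; [left | right]; apply/imsetP; exists j; rewrite // inE -ej.
Qed.

Lemma card_minor_entries m : #|minor_entries m| = #|m.2| + #|m.1|.
Proof.
rewrite cardsU !card_imset; [|exact: barred_inj|exact: unbarred_inj].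
suff -> : unbarred @: m.2 :&: barred @: m.1 = set0 by rewrite cards0 subn0.
apply/setP => e; rewrite !inE; apply/negP => /andP[/imsetP[i _ ->]].
by rewrite (negbTE (unbarred_notin_barred _ _)).
Qed.

Lemma card_entries_minor_barred (S : {set entry}) (g : 'I_n) :
  #|[set x in (entries_minor S).1 | x <= g]| = #|[set e in S | barred g <= e]|.
Proof.
rewrite -(card_imset _ barred_inj); apply: eq_card => e; rewrite inE.
apply/imsetP/andP => [[x] | [eS ge]].
  rewrite !inE => /andP[xS xg] ->; split => //.
  by rewrite !val_barred; have := ltn_ord x; have := ltn_ord g; lia.
have : 0 < e by apply: leq_trans ge; rewrite val_barred; have := ltn_ord g; lia.
case/entryP=> j ej; move: ge; rewrite ej.
  by rewrite val_unbarred val_barred; have := ltn_ord j; have := ltn_ord g; lia.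
rewrite !val_barred => jg; exists j; rewrite // !inE -ej eS /=.
by have := ltn_ord j; have := ltn_ord g; lia.
Qed.

End Entries.

Section Columns.
Variables n k : nat.
Implicit Types T : column n k.

Definition column_entries T : {set 'I_(2 * n).+1} := [set T p | p : 'I_k].

Lemma mem_column_entries T e : (e \in column_entries T) = [exists p, T p == e :> nat].
Proof.
apply/imsetP/existsP => [[p _ ->] | [p /eqP/val_inj <-]]; by exists p.
Qed.

Lemma column_weightE T :
  column_weight T = minor_weight (entries_minor (column_entries T)).
Proof.
by apply/ffunP => j; rewrite !ffunE !inE !mem_column_entries val_unbarred val_barred.
Qed.

Lemma is_spPBWP T :
  reflect [/\ forall p, 0 < T p,
              forall p, T p <= k -> T p = p.+1 :> nat,
              forall p1 p2 : 'I_k, p1 < p2 -> T p1 != p1.+1 :> nat -> T p2 < T p1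
            & forall p p' : 'I_k, p.+1 < k -> T p = p.+1 :> nat ->
                T p' = (2 * n).+1 - p.+1 :> nat -> p' < p]
          (is_spPBW T).
Proof.
apply: (iffP and4P) => [[/forallP pos /forallP fixed /forallP decr /forallP iii] |
                        [pos fixed decr iii]]; split.
- exact: pos.
- by move=> p /(implyP (fixed p)) /eqP.
- by move=> p1 p2 lt ne; apply: (implyP (forallP (decr p1) p2)); rewrite lt ne.
- move=> p p' pk Tp Tp'; apply: (implyP (forallP (iii p) p')).
  by apply/and3P; split => //; apply/eqP; [exact: Tp | exact: Tp'].
- by apply/forallP.
- by apply/forallP => p; apply/implyP => /fixed/eqP Tp; exact: Tp.
- by apply/forallP => p1; apply/forallP => p2; apply/implyP => /andP[]; apply: decr.
- apply/forallP => p; apply/forallP => p'; apply/implyP => /and3P[pk /eqP Tp /eqP Tp'].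
  exact: iii.
Qed.

Section ValidColumn.
Variable T : column n k.
Hypothesis spT : is_spPBW T.

Lemma spPBW_inj : injective T.
Proof.
case/is_spPBWP: spT => _ fixed decr _.
have neq (p q : 'I_k) : p < q -> T p != T q :> nat.
  move=> pq; case: (eqVneq (T p : nat) p.+1) => [Tp | free].
    by apply/eqP => Tpq; have := fixed q; rewrite -Tpq Tp; have := ltn_ord q; lia.
  by rewrite neq_ltn (decr _ _ pq free) orbT.
move=> p q eTpq; case: (ltngtP p q) => [lt | lt | /val_inj //].
  by have := neq _ _ lt; rewrite eTpq eqxx.
by have := neq _ _ lt; rewrite eTpq eqxx.
Qed.

Lemma ord0_notin_column_entries : ord0 \notin column_entries T.
Proof.
case/is_spPBWP: spT => pos _ _ _; rewrite mem_column_entries.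
by apply/existsP => -[p /eqP Tp]; have := pos p; rewrite Tp.
Qed.

Lemma card_column_entries : #|column_entries T| = k.
Proof. by rewrite card_imset ?card_ord //; exact: spPBW_inj. Qed.

Lemma card_column_entries_geq (p : 'I_k) : T p != p.+1 :> nat ->
  #|[set e in column_entries T | T p <= e]| <=
  #|[set q : 'I_k | (q <= p) && (T q != q.+1 :> nat)]|.
Proof.
case/is_spPBWP: spT => _ fixed decr _ free.
rewrite -(card_imset _ spPBW_inj); apply: subset_leq_card; apply/subsetP => e.
rewrite inE => /andP[/imsetP[q _ ->] le]; apply: imset_f; rewrite inE.
have -> : q <= p by rewrite leqNgt; apply/negP => /decr /(_ free); rewrite ltnNge le.
by apply: contra free => /eqP Tq; apply/eqP/fixed; apply: leq_trans le _; rewrite Tq.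
Qed.

Lemma card_free_rows_ltn (g : nat) : k <= n ->
  #|[set q : 'I_k | (q < g) && (T q != q.+1 :> nat)]| <=
  #|[set j : 'I_n | (j < g) && (j \notin (entries_minor (column_entries T)).2)]|.
Proof.
case/is_spPBWP: spT => _ fixed _ _ kn.
have widen_inj : injective (widen_ord kn) by move=> a b [] /val_inj.
rewrite -(card_imset _ widen_inj); apply: subset_leq_card; apply/subsetP => j /imsetP[q].
rewrite !inE => /andP[qg free] ->; rewrite qg /=.
apply: contra free => /imsetP[r _ /(congr1 (@nat_of_ord _))].
rewrite val_unbarred /= => qr.
have Tr : T r = r.+1 :> nat by apply: fixed; rewrite -qr ltn_ord.
have rq : r = q by apply/val_inj; move: Tr; rewrite -qr => -[].
by rewrite -rq Tr.
Qed.

Lemma column_entries_fit : k <= n ->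
  fit_condition (entries_minor (column_entries T)).2
                 (entries_minor (column_entries T)).1.
Proof.
move=> kn g /setIP[g1 g2].
move: (g1) (g2); rewrite !inE => /imsetP[p _ Tp] /imsetP[p' _ Tp'].
case: (leqP k g.+1) => [large | small].
  apply: fit_inequality_large => //; rewrite -card_minor_entries entries_minorK.
    by rewrite card_column_entries.
  exact: ord0_notin_column_entries.
(* Rule (iii) puts the entry gbar in a free row p' above row g, and by rule (ii)
   every entry >= gbar sits in a free row at or above p'. *)
case/is_spPBWP: spT => _ fixed _ iii.
have pg : p = g :> nat.
  by have := fixed p; rewrite -Tp val_unbarred => /(_ (ltnW small)) [].
have p'p : p' < p by apply: iii; rewrite -?Tp -?Tp' ?val_unbarred ?val_barred pg.
have free' : T p' != p'.+1 :> nat.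
  by rewrite -Tp' val_barred; have := ltn_ord g; have := ltn_ord p'; lia.
rewrite card_entries_minor_barred Tp'.
apply: leq_trans (card_column_entries_geq free') _.
apply: leq_trans (card_free_rows_ltn g kn); apply: subset_leq_card.
apply/subsetP => q; rewrite !inE => /andP[qp' ->].
by rewrite -pg andbT (leq_ltn_trans qp').
Qed.

End ValidColumn.

Lemma spPBW_row_leq T T' (p : 'I_k) : is_spPBW T -> is_spPBW T' ->
  column_entries T = column_entries T' ->
  (forall q : 'I_k, q < p -> T q = T' q) -> T' p <= T p.
Proof.
move=> spT spT' eE above; rewrite leqNgt; apply/negP => lt.
have /imsetP[q _ Tq] : T' p \in column_entries T by rewrite eE imset_f.
case: (ltngtP q p) => [qp | pq | /val_inj qp]; last by rewrite Tq qp ltnn in lt.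
  have := spPBW_inj spT' (etrans Tq (above q qp)).
  by move=> pq; rewrite pq ltnn in qp.
case/is_spPBWP: (spT) => _ _ decr _.
have free : T p != p.+1 :> nat.
  apply/eqP => Tp.
  have /imsetP[r _ Tr] : T p \in column_entries T' by rewrite -eE imset_f.
  case/is_spPBWP: spT' => _ fixed' _ _.
  have Tr' : T' r = r.+1 :> nat by apply: fixed'; rewrite -Tr Tp ltn_ord.
  have rp : r = p by apply/val_inj; move: Tr'; rewrite -Tr Tp => -[].
  by move: lt; rewrite (_ : T' p = T p) ?ltnn // Tr rp.
by have := decr p q pq free; rewrite -Tq ltnNge ltnW.
Qed.

Lemma spPBW_column_entries_inj T T' : is_spPBW T -> is_spPBW T' ->
  column_entries T = column_entries T' -> T = T'.
Proof.
move=> spT spT' eE.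
suff agree m (p : 'I_k) : p < m -> T p = T' p.
  by apply/ffunP => p; apply: (agree p.+1).
elim: m p => [//|m IH] p; rewrite ltnS leq_eqVlt => /orP[/eqP pm | /IH //].
have above (q : 'I_k) : q < p -> T q = T' q by move=> qp; apply: IH; rewrite -pm.
have le1 := spPBW_row_leq spT spT' eE above.
have le2 := spPBW_row_leq spT' spT (esym eE) (fun q qp => esym (above q qp)).
by apply/val_inj/eqP; rewrite eqn_leq le1 le2.
Qed.

End Columns.

Section CanonicalColumn.
Variables (n k : nat) (S : {set 'I_(2 * n).+1}).

Definition in_entries (v : nat) : bool := [exists e in S, e == v :> nat].

Definition high_entries : seq nat := [seq v <- iota k.+1 (2 * n - k) | in_entries v].

Definition free_rows_before (q : nat) : nat :=
  count (fun i => ~~ in_entries i.+1) (iota 0 q).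

(* Row q+1 keeps the entry q+1 if available; otherwise it receives the
   (r+1)-th largest entry above k, r being the number of free rows above it. *)
Definition canonical_entry (q : nat) : nat :=
  if in_entries q.+1 then q.+1
  else nth 0 high_entries (size high_entries - (free_rows_before q).+1).

Definition canonical_column : column n k := [ffun q : 'I_k => inord (canonical_entry q)].

Hypotheses (S0 : ord0 \notin S) (cardS : #|S| = k) (kn : k <= n).

Lemma in_entriesE (e : 'I_(2 * n).+1) : in_entries e = (e \in S).
Proof.
apply/existsP/idP => [[e' /andP[e'S /eqP/val_inj <-]] // | eS].
by exists e; rewrite eS eqxx.
Qed.

Lemma in_entries_range v : in_entries v -> 0 < v <= 2 * n.
Proof.
case/existsP=> e /andP[eS /eqP <-]; have := ltn_ord e; rewrite ltnS => ->.
rewrite andbT lt0n.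
by apply: contraNneq S0 => e0; rewrite (_ : ord0 = e) //; apply/val_inj.
Qed.

Lemma count_in_entries : count in_entries (iota 0 (2 * n).+1) = k.
Proof.
by rewrite count_iota_card -cardS; apply: eq_card => e; rewrite inE in_entriesE.
Qed.

Lemma high_entries_sorted : sorted ltn high_entries.
Proof. exact: (sorted_filter ltn_trans _ (iota_ltn_sorted _ _)). Qed.

Lemma mem_high_entries v : (v \in high_entries) = in_entries v && (k < v <= 2 * n).
Proof. by rewrite mem_filter mem_iota; congr andb; apply/idP/idP; lia. Qed.

Lemma free_rows_beforeD p d :
  free_rows_before (p + d) =
  free_rows_before p + count (fun i => ~~ in_entries i.+1) (iota p d).
Proof. by rewrite /free_rows_before iotaD count_cat. Qed.

Lemma leq_free_rows_before p q : p <= q -> free_rows_before p <= free_rows_before q.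
Proof. by move=> pq; rewrite -(subnKC pq) free_rows_beforeD leq_addr. Qed.

Lemma ltn_free_rows_before p q : p < q -> ~~ in_entries p.+1 ->
  free_rows_before p < free_rows_before q.
Proof.
move=> pq free; apply: leq_trans (leq_free_rows_before pq).
by rewrite -[p.+1]addn1 free_rows_beforeD /= free addn0 addn1.
Qed.

Lemma size_high_entries : size high_entries = free_rows_before k.
Proof.
have e0 : in_entries 0 = false by apply/negbTE/negP => /in_entries_range.
have low : count in_entries (iota 1 k) + free_rows_before k = k.
  rewrite -[1]/(1 + 0) iotaDl count_map -[RHS](size_iota 0 k).
  exact: (count_predC (fun i => in_entries i.+1)).
have high : count in_entries (iota k.+1 (2 * n - k)) = size high_entries.
  by rewrite size_filter.
have := count_in_entries; rewrite (_ : (2 * n).+1 = 1 + (k + (2 * n - k))); last lia.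
by rewrite !iotaD !count_cat /= e0 !add0n add1n; lia.
Qed.

Lemma canonical_entry_fixed q : in_entries q.+1 -> canonical_entry q = q.+1.
Proof. by rewrite /canonical_entry => ->. Qed.

Lemma canonical_entry_free q : q < k -> ~~ in_entries q.+1 ->
  [/\ canonical_entry q =
        nth 0 high_entries (size high_entries - (free_rows_before q).+1),
      free_rows_before q < size high_entries & k < canonical_entry q].
Proof.
move=> qk free; rewrite /canonical_entry (negbTE free).
have lt : free_rows_before q < size high_entries.
  by rewrite size_high_entries ltn_free_rows_before.
split=> //.
have /mem_nth : size high_entries - (free_rows_before q).+1 < size high_entries by lia.
by move=> /(_ 0); rewrite mem_high_entries => /andP[_ /andP[]].
Qed.

Lemma canonical_entry_in q : q < k -> in_entries (canonical_entry q).
Proof.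
move=> qk; case: (boolP (in_entries q.+1)) => [fixed | free].
  by rewrite canonical_entry_fixed.
have [-> lt _] := canonical_entry_free qk free.
have /mem_nth : size high_entries - (free_rows_before q).+1 < size high_entries by lia.
by move=> /(_ 0); rewrite mem_high_entries => /andP[].
Qed.

Lemma val_canonical_column q : canonical_column q = canonical_entry q :> nat.
Proof.
rewrite ffunE inordK // ltnS.
by have /in_entries_range/andP[] := canonical_entry_in (ltn_ord q).
Qed.

Lemma canonical_entry_decr p1 p2 : p1 < p2 -> p2 < k ->
  canonical_entry p1 != p1.+1 -> canonical_entry p2 < canonical_entry p1.
Proof.
move=> lt12 p2k ne1.
have free1 : ~~ in_entries p1.+1 by apply: contra ne1 => /canonical_entry_fixed ->.
have [e1 r1 k1] := canonical_entry_free (ltn_trans lt12 p2k) free1.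
case: (boolP (in_entries p2.+1)) => [fixed2 | free2].
  by rewrite canonical_entry_fixed // (leq_ltn_trans p2k k1).
have [e2 r2 _] := canonical_entry_free p2k free2.
have := ltn_free_rows_before lt12 free1.
by rewrite e1 e2 => r12; apply: ltn_sorted_ltn_nth high_entries_sorted _ _; lia.
Qed.

Lemma free_rows_before_card (g : 'I_n) :
  free_rows_before g = #|[set j : 'I_n | (j < g) && (j \notin (entries_minor S).2)]|.
Proof.
rewrite /free_rows_before -(count_iota_ltn _ (ltnW (ltn_ord g))) count_iota_card.
by apply: eq_card => j; rewrite !inE -in_entriesE val_unbarred.
Qed.

Lemma count_high_entries (P : pred nat) :
  count P high_entries <= #|[set e in S | P e]|.
Proof.
rewrite count_filter.
have -> : #|[set e in S | P e]| = count (predI P in_entries) (iota 0 (2 * n).+1).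
  by rewrite count_iota_card; apply: eq_card => e; rewrite !inE in_entriesE andbC.
rewrite (_ : (2 * n).+1 = k.+1 + (2 * n - k)); last lia.
by rewrite iotaD count_cat leq_addl.
Qed.

Lemma free_rows_before_ltn_card q : q < k -> ~~ in_entries q.+1 ->
  free_rows_before q < #|[set e in S | canonical_entry q <= e]|.
Proof.
move=> qk free; have [eq lt _] := canonical_entry_free qk free.
set i := size high_entries - (free_rows_before q).+1 in eq.
apply: leq_trans (count_high_entries _).
rewrite -(cat_take_drop i high_entries) count_cat.
have: all (leq (canonical_entry q)) (drop i high_entries).
  apply/(all_nthP 0) => t; rewrite size_drop => ti.
  by rewrite nth_drop eq; apply: ltn_sorted_leq_nth high_entries_sorted _ _; lia.
rewrite all_count size_drop => /eqP->; lia.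
Qed.

Hypothesis fit : fit_condition (entries_minor S).2 (entries_minor S).1.

Lemma canonical_entry_barred_above (p p' : 'I_k) : p.+1 < k ->
  canonical_entry p = p.+1 -> canonical_entry p' = (2 * n).+1 - p.+1 -> p' < p.
Proof.
(* Otherwise p <= p', so the free rows above p are no more than those above p',
   which are fewer than the entries >= pbar, against fit_condition at p. *)
move=> pk ep ep'.
have pn : p < n by apply: leq_trans kn.
have fixed : in_entries p.+1.
  apply: contraTT pk => free; have [_ _] := canonical_entry_free (ltn_ord p) free.
  by rewrite ep -leqNgt => /ltnW.
have free' : ~~ in_entries p'.+1.
  by apply/negP => /canonical_entry_fixed; rewrite ep'; have := ltn_ord p'; lia.
pose g := Ordinal pn.
have gI : g \in (entries_minor S).2 :&: (entries_minor S).1.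
  rewrite !inE -!in_entriesE val_unbarred val_barred /= fixed -ep'.
  exact: canonical_entry_in.
have := fit gI; rewrite card_entries_minor_barred -(free_rows_before_card g).
rewrite val_barred /= -ep' => /(leq_trans (free_rows_before_ltn_card (ltn_ord p') free')).
by apply: contraLR; rewrite -!leqNgt => /leq_free_rows_before.
Qed.

Lemma canonical_column_spPBW : is_spPBW canonical_column.
Proof.
apply/is_spPBWP; split=> [p | p | p1 p2 | p p']; rewrite !val_canonical_column.
- by have /in_entries_range/andP[] := canonical_entry_in (ltn_ord p).
- case: (boolP (in_entries p.+1)) => [/canonical_entry_fixed // | free].
  by have [_ _ kp] := canonical_entry_free (ltn_ord p) free; rewrite leqNgt kp.
- by move=> lt12; apply: canonical_entry_decr.
- exact: canonical_entry_barred_above.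
Qed.

Lemma canonical_column_entries : column_entries canonical_column = S.
Proof.
apply/eqP; rewrite eqEcard card_column_entries ?cardS ?leqnn ?andbT //.
  apply/subsetP => _ /imsetP[q _ ->].
  by rewrite -in_entriesE val_canonical_column canonical_entry_in.
exact: canonical_column_spPBW.
Qed.

End CanonicalColumn.

Section Bijection.
Variables n k : nat.
Hypothesis kn : k <= n.

Lemma minor_canonical_spPBW (m : minor n) : is_kminor k m -> reverse_admissible m ->
  is_spPBW (canonical_column k (minor_entries m)).
Proof.
move=> /eqP km /reverse_admissible_fit fit.
by apply: canonical_column_spPBW;
  rewrite ?ord0_notin_minor_entries ?card_minor_entries ?minor_entriesK.
Qed.

Lemma minor_canonical_entries (m : minor n) : is_kminor k m -> reverse_admissible m ->
  column_entries (canonical_column k (minor_entries m)) = minor_entries m.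
Proof.
move=> /eqP km /reverse_admissible_fit fit.
by apply: canonical_column_entries;
  rewrite ?ord0_notin_minor_entries ?card_minor_entries ?minor_entriesK.
Qed.

Lemma spPBW_kminor (T : column n k) : is_spPBW T ->
  is_kminor k (entries_minor (column_entries T)).
Proof.
move=> spT; rewrite /is_kminor -card_minor_entries entries_minorK.
  by rewrite card_column_entries.
exact: ord0_notin_column_entries.
Qed.

Lemma spPBW_reverse_admissible (T : column n k) : is_spPBW T ->
  reverse_admissible (entries_minor (column_entries T)).
Proof. by move=> spT; apply/fit_reverse_admissible/column_entries_fit. Qed.

End Bijection.

Theorem proposition4p10 (n k : nat) :
  (1 <= n)%N -> (1 <= k <= n)%N ->
  exists f : {m : minor n | is_kminor k m && reverse_admissible m} ->
             {T : column n k | is_spPBW T},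
    bijective f /\ (forall m, column_weight (val (f m)) = minor_weight (val m)).
Proof.
move=> _ /andP[_ kn].
have colP (m : {m : minor n | is_kminor k m && reverse_admissible m}) :
    is_spPBW (canonical_column k (minor_entries (val m))).
  by case/andP: (valP m) => km ra; apply: minor_canonical_spPBW.
have minP (T : {T : column n k | is_spPBW T}) :
    is_kminor k (entries_minor (column_entries (val T))) &&
    reverse_admissible (entries_minor (column_entries (val T))).
  by rewrite spPBW_kminor ?spPBW_reverse_admissible ?(valP T).
exists (fun m => exist (@is_spPBW n k) _ (colP m)); split.
  exists (fun T => exist (fun m => is_kminor k m && reverse_admissible m) _ (minP T)).
    case=> m mP; apply/val_inj => /=; case/andP: (mP) => km ra.
    by rewrite minor_canonical_entries ?minor_entriesK.
  case=> T spT; apply/val_inj => /=; have /andP[km ra] := minP (exist _ T spT).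
  apply: (spPBW_column_entries_inj (minor_canonical_spPBW kn km ra) spT).
  by rewrite minor_canonical_entries // entries_minorK // ord0_notin_column_entries.
case=> m mP; case/andP: (mP) => km ra.
by rewrite /= column_weightE minor_canonical_entries ?minor_entriesK.
Qed.
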